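(* If $\mu$ and $\nu$ are fuzzy $\Gamma$-hyper bi-ideals of a fuzzy $\Gamma$-hypersemigroup $(M,\circ)$, then $\mu\cap\nu$ is also a fuzzy $\Gamma$-hyper bi-ideal of $(M,\circ)$.
   Context: $M,\Gamma$ are nonempty sets; a fuzzy subset of $M$ is a map $M\to[0,1]$. A fuzzy $\Gamma$-hyperoperation assigns to each $(a,\gamma,b)\in M\times\Gamma\times M$ a fuzzy subset $a\circ\gamma\circ b$. For $a\in M$ and fuzzy $\mu$: $(a\circ\gamma\circ\mu)(r)=\bigvee_{t\in M}((a\circ\gamma\circ t)(r)\wedge\mu(t))$ if $\mu\ne0$, else $0$; $(\mu\circ\gamma\circ a)(r)=\bigvee_{t\in M}(\mu(t)\wedge(t\circ\gamma\circ a)(r))$ if $\mu\ne0$, else $0$. For fuzzy $\mu,\nu$: $(\mu\circ\gamma\circ\nu)(t)=\bigvee_{p,q\in M}(\mu(p)\wedge(p\circ\gamma\circ q)(t)\wedge\nu(q))$. $(M,\circ)$ is a fuzzy $\Gamma$-hypersemigroup if $(a\circ\alpha\circ b)\circ\beta\circ c=a\circ\alpha\circ(b\circ\beta\circ c)$ for all $a,b,c\in M$, $\alpha,\beta\in\Gamma$. For fuzzy sets, $\mu\subseteq\nu$ means $\mu(x)\le\nu(x)$ for all $x$; $(\mu\cap\nu)(x)=\min(\mu(x),\nu(x))$. A fuzzy sub $\Gamma$-hypersemigroup is a fuzzy subset $\mu$ with $\mu\circ\gamma\circ\mu\subseteq\mu$ for all $\gamma\in\Gamma$. A fuzzy $\Gamma$-hyper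 bi-ideal is a fuzzy sub $\Gamma$-hypersemigroup $\mu$ with $(\mu\circ\alpha\circ y)\circ\beta\circ\mu\subseteq\mu$ for all $y\in M$, $\alpha,\beta\in\Gamma$. *)

From HB Require Import structures.
From mathcomp Require Import all_boot all_order all_algebra.
From mathcomp Require Import boolp classical_sets reals.
Set Implicit Arguments. Unset Strict Implicit. Unset Printing Implicit Defensive.
Import Order.TTheory GRing.Theory Num.Theory.
Local Open Scope ring_scope.
Local Open Scope classical_set_scope.

Definition is_fuzzy (R : realType) (M : Type) (mu : M -> R) : Prop :=
  forall x, 0 <= mu x <= 1.

Definition fzero (R : realType) (M : Type) : M -> R := fun _ => 0.

Definition hyperop (R : realType) (M G : Type) := M -> G -> M -> (M -> R).

Definition is_fuzzy_hyperop (R : realType) (M G : Type) (h : hyperop R M G) : Prop :=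
  forall a g b, is_fuzzy (h a g b).

Definition elt_op (R : realType) (M G : Type) (h : hyperop R M G)
  (a : M) (g : G) (mu : M -> R) : M -> R :=
  fun r => if pselect (mu = @fzero R M) then 0
           else sup [set v | exists t : M, v = Order.min (h a g t r) (mu t)].

Definition op_elt (R : realType) (M G : Type) (h : hyperop R M G)
  (mu : M -> R) (g : G) (a : M) : M -> R :=
  fun r => if pselect (mu = @fzero R M) then 0
           else sup [set v | exists t : M, v = Order.min (mu t) (h t g a r)].

Definition op_fuzzy (R : realType) (M G : Type) (h : hyperop R M G)
  (mu : M -> R) (g : G) (nu : M -> R) : M -> R :=
  fun t => sup [set v | exists p q : M,
                  v = Order.min (mu p) (Order.min (h p g q t) (nu q))].

Definition fsubset (R : realType) (M : Type) (mu nu : M -> R) : Prop :=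
  forall x, mu x <= nu x.

Definition fcap (R : realType) (M : Type) (mu nu : M -> R) : M -> R :=
  fun x => Order.min (mu x) (nu x).

Definition is_fuzzy_hypersemigroup (R : realType) (M G : Type) (h : hyperop R M G) : Prop :=
  is_fuzzy_hyperop h /\
  forall (a b c : M) (al be : G),
    op_elt h (h a al b) be c = elt_op h a al (h b be c).

Definition is_fuzzy_sub_hypersemigroup (R : realType) (M G : Type) (h : hyperop R M G)
  (mu : M -> R) : Prop :=
  is_fuzzy mu /\ forall g : G, fsubset (op_fuzzy h mu g mu) mu.

Definition is_fuzzy_hyper_bi_ideal (R : realType) (M G : Type) (h : hyperop R M G)
  (mu : M -> R) : Prop :=
  is_fuzzy_sub_hypersemigroup h mu /\
  forall (y : M) (al be : G), fsubset (op_fuzzy h (op_elt h mu al y) be mu) mu.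

From mathcomp Require Import all_boot all_order all_algebra.
From mathcomp Require Import boolp classical_sets reals.
Set Implicit Arguments. Unset Strict Implicit. Unset Printing Implicit Defensive.
Import Order.TTheory GRing.Theory Num.Theory.
Local Open Scope ring_scope.
Local Open Scope classical_set_scope.

(* Every operation on fuzzy sets occurring in the definition of a bi-ideal is
   monotone, and the intersection is the greatest lower bound; so each
   product built from [mu ∩ nu] lies below the corresponding products built
   from [mu] and from [nu], hence below both [mu] and [nu]. *)

Lemma sup_le_dominated (R : realType) (A B : set R) :
  (forall a, A a -> exists2 b, B b & a <= b) -> A !=set0 -> has_ubound B ->
  sup A <= sup B.
Proof.
move=> domAB [a Aa] ubB; apply: sup_le.
- by move=> x /domAB [b Bb le_xb]; apply/downP; exists b.
- by exists a.
- by have [b Bb _] := domAB a Aa; split => //; exists b.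
Qed.

Section FuzzyIntersection.
Variables (R : realType) (M : Type).
Implicit Types mu nu lam : M -> R.

Lemma fcap_subl mu nu : fsubset (fcap mu nu) mu.
Proof. by move=> x; rewrite /fcap ge_min lexx. Qed.

Lemma fcap_subr mu nu : fsubset (fcap mu nu) nu.
Proof. by move=> x; rewrite /fcap ge_min lexx orbT. Qed.

Lemma fsubset_fcap lam mu nu :
  fsubset lam mu -> fsubset lam nu -> fsubset lam (fcap mu nu).
Proof. by move=> le_mu le_nu x; rewrite /fcap le_min le_mu le_nu. Qed.

Lemma fuzzy_fcap mu nu : is_fuzzy mu -> is_fuzzy nu -> is_fuzzy (fcap mu nu).
Proof.
move=> fmu fnu x; have /andP[mu0 mu1] := fmu x; have /andP[nu0 _] := fnu x.
by rewrite /fcap le_min mu0 nu0 ge_min mu1.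
Qed.

End FuzzyIntersection.

Section Monotonicity.
Variables (R : realType) (M G : Type) (h : hyperop R M G).
Hypothesis inhM : inhabited M.
Hypothesis fuzzy_h : is_fuzzy_hyperop h.
Implicit Types mu nu : M -> R.

Lemma op_fuzzy_mono mu mu' nu nu' g :
  fsubset mu mu' -> fsubset nu nu' ->
  fsubset (op_fuzzy h mu g nu) (op_fuzzy h mu' g nu').
Proof.
case: inhM => m le_mu le_nu t; apply: sup_le_dominated.
- move=> _ [p [q ->]].
  exists (Order.min (mu' p) (Order.min (h p g q t) (nu' q))); first by exists p, q.
  by rewrite le_min2 ?le_min2.
- by exists (Order.min (mu m) (Order.min (h m g m t) (nu m))); exists m, m.
- exists 1 => _ [p [q ->]]; have /andP[_ h1] := fuzzy_h p g q t.
  by rewrite !ge_min h1 orbT.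
Qed.

(* [op_elt] is [0] at the zero fuzzy set by fiat, so monotonicity needs
   [mu >= 0]: then [mu <= mu'] with [mu' = 0] forces [mu = 0]. *)
Lemma op_elt_mono mu mu' g y :
  (forall x, 0 <= mu x) -> fsubset mu mu' ->
  fsubset (op_elt h mu g y) (op_elt h mu' g y).
Proof.
case: inhM => m mu_ge0 le_mu r.
have ubB : has_ubound [set v | exists t, v = Order.min (mu' t) (h t g y r)].
  by exists 1 => _ [t ->]; have /andP[_ h1] := fuzzy_h t g y r; rewrite ge_min h1 orbT.
rewrite /op_elt; case: (pselect (mu = _)) => [?|mu_neq0].
all: case: (pselect (mu' = _)) => [mu'0|?] //.
- apply: le_trans (ub_le_sup ubB _); last by exists m.
  have /andP[h0 _] := fuzzy_h m g y r.
  by rewrite le_min h0 (le_trans (mu_ge0 m) (le_mu m)).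
- case: mu_neq0; apply/funext => x; apply/eqP.
  by rewrite eq_le mu_ge0 andbT -[X in _ <= X](congr1 (@^~ x) mu'0) le_mu.
apply: sup_le_dominated => //; last by exists (Order.min (mu m) (h m g y r)), m.
move=> _ [t ->]; exists (Order.min (mu' t) (h t g y r)); first by exists t.
by rewrite le_min2.
Qed.

Lemma fuzzy_sub_hypersemigroup_fcap mu nu :
  is_fuzzy_sub_hypersemigroup h mu -> is_fuzzy_sub_hypersemigroup h nu ->
  is_fuzzy_sub_hypersemigroup h (fcap mu nu).
Proof.
move=> [fmu sub_mu] [fnu sub_nu]; split; first exact: fuzzy_fcap.
move=> g; apply: fsubset_fcap => x.
- by apply: le_trans (sub_mu g x); apply: op_fuzzy_mono; apply: fcap_subl.
- by apply: le_trans (sub_nu g x); apply: op_fuzzy_mono; apply: fcap_subr.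
Qed.

Lemma fuzzy_hyper_bi_ideal_fcap mu nu :
  is_fuzzy_hyper_bi_ideal h mu -> is_fuzzy_hyper_bi_ideal h nu ->
  is_fuzzy_hyper_bi_ideal h (fcap mu nu).
Proof.
move=> [smu bi_mu] [snu bi_nu].
have scap := fuzzy_sub_hypersemigroup_fcap smu snu.
have cap_ge0 z : 0 <= fcap mu nu z by have [/(_ z)/andP[]] := scap.
split=> // y al be; apply: fsubset_fcap => x.
- apply: le_trans (bi_mu y al be x); apply: op_fuzzy_mono; last exact: fcap_subl.
  by apply: op_elt_mono => //; apply: fcap_subl.
- apply: le_trans (bi_nu y al be x); apply: op_fuzzy_mono; last exact: fcap_subr.
  by apply: op_elt_mono => //; apply: fcap_subr.
Qed.

End Monotonicity.

Theorem theorem4p13 (R : realType) (M G : Type) (h : hyperop R M G)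
  (mu nu : M -> R) :
  inhabited M -> inhabited G ->
  is_fuzzy_hypersemigroup h ->
  is_fuzzy_hyper_bi_ideal h mu -> is_fuzzy_hyper_bi_ideal h nu ->
  is_fuzzy_hyper_bi_ideal h (fcap mu nu).
Proof.
by move=> inhM _ [fuzzy_h _]; exact: fuzzy_hyper_bi_ideal_fcap.
Qed.
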